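(* Let $A$ be a semi-directed cycle in the dependency graph $N^\star$ of a TCP-net $N$. Then $A$ is conditionally acyclic if $A$ contains a pair of distinct ci-arcs $\gamma_i,\gamma_j$ such that either (a) $A$ contains directed edges, and for every assignment $w$ to $S(\gamma_i)\cap S(\gamma_j)$, at least one of $\gamma_i,\gamma_j$ is oriented by $w$ in the direction opposite to the direction of $A$; or (b) all edges of $A$ are undirected (ci-arcs), and for every assignment $w$ to $S(\gamma_i)\cap S(\gamma_j)$, $\gamma_i$ and $\gamma_j$ are oriented by $w$ in opposite directions with respect to $A$.
   Context: Variables $V$ have finite nonempty domains $D(X)$; $D(U)$ denotes the set of assignments to $U\subseteq V$. A TCP-net is a tuple $N=\langle V,\mathsf{cp},\mathsf{i},\mathsf{ci},\mathsf{cpt},\mathsf{cit}\rangle$ where: $\mathsf{cp}$ is a set of directed cp-arcs $(X,Y)$ between distinct variables; $\mathsf{i}$ is a set of directed i-arcs $(X,Y)$ between distinct variables; $\mathsf{ci}$ is a set of undirected ci-arcs $\{X,Y\}$ between distinct variables, each with a nonempty selector set $S(X,Y)\subseteq V\setminus\{X,Y\}$; $\mathsf{cpt}$ assigns to each variable $X$ a table mapping each assignment to its cp-parents to a strict partial order on $D(X)$; $\mathsf{cit}$ assigns to each ci-arc $\gamma=\{X,Y\}$ a table $CIT(\gamma)$, a possibly partial map from $D(S(X,Y))$ (its rows) to $\{X\rhd Y,\ Y\rhd X\}$; an entry $X\rhd Y$ is read as orienting $\gamma$ from $X$ to $Y$. The dependency graph $N^\star$ has vertex set $V$, the cp-arcs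 and i-arcs as directed edges, the ci-arcs as undirected edges, and additionally, for every ci-arc $\{X_i,X_j\}$ and every $X_k\in S(X_i,X_j)$, the directed edges $(X_k,X_i)$ and $(X_k,X_j)$ (if not already present). A semi-directed cycle of $N^\star$ is a set $A$ of edges of $N^\star$ such that: the underlying undirected (multi)graph of $A$ is a simple cycle (connected, every vertex of degree 2); not all edges of $A$ are directed; and all directed edges of $A$ point the same way around the cycle — this common way is called the direction of $A$. Let $S(A)$ be the union of the selector sets of the ci-arcs in $A$. $A$ is conditionally directed if there is an assignment to $S(A)$ under which every ci-arc of $A$ receives a CIT entry and the resulting orientations, together with the directed edges of $A$, make $A$ a directed cycle; otherwise $A$ is conditionally acyclic. For a ci-arc $\gamma=\{X,Y\}$ and an assignment $w$ to a subset of $S(\gamma)$, $w$ orients $\gamma$ (in a given direction) if all defined rows of $CIT(\gamma)$ consistent with $w$ express the same relative importance between $X$ and $Y$ (that direction). *)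

From HB Require Import structures.
From mathcomp Require Import all_boot.
Set Implicit Arguments. Unset Strict Implicit. Unset Printing Implicit Defensive.

(* An assignment to a subset U of V is represented by any complete assignment,
   only its values on U being relevant (domains are nonempty, so every partial
   assignment extends). *)
Definition assignment (V : finType) (D : V -> finType) := forall X : V, D X.

Definition agree_on (V : finType) (D : V -> finType) (U : {set V})
  (a b : assignment D) : Prop := forall Z, Z \in U -> a Z = b Z.

(* A TCP-net over variables V with domains D.
   - cp X Y : cp-arc (X,Y);  iarc X Y : i-arc (X,Y);  ci X Y : ci-arc {X,Y}
     (symmetric relation);  sel X Y : selector set S(X,Y).
   - cpt X a : the strict partial order on D X given by the CPT row for the
     values of the cp-parents of X in a (it depends only on those values).
   - cit X Y a : the CIT(\{X,Y\}) entry for the row given by the values of a on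
     S(X,Y) (depends only on those values): [None] if the row is undefined,
     [Some Z] with Z \in \{X,Y\} meaning Z is more important (Z |> other),
     i.e. the arc is oriented from Z. *)
Record TCPnet (V : finType) (D : V -> finType) := {
  dom_nonempty : forall X, 0 < #|{: D X}|;
  cp : rel V;
  iarc : rel V;
  ci : rel V;
  sel : V -> V -> {set V};
  cpt : forall X : V, assignment D -> rel (D X);
  cit : V -> V -> assignment D -> option V;
  cp_irr : forall X, ~~ cp X X;
  iarc_irr : forall X, ~~ iarc X X;
  ci_irr : forall X, ~~ ci X X;
  ci_sym : forall X Y, ci X Y = ci Y X;
  sel_sym : forall X Y, sel X Y = sel Y X;
  sel_ok : forall X Y, ci X Y ->
     [/\ sel X Y != set0, X \notin sel X Y & Y \notin sel X Y];
  cpt_dep : forall X (a b : assignment D),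
     (forall Y, cp Y X -> a Y = b Y) -> @cpt X a = @cpt X b;
  cpt_irrefl : forall X a (x : D X), ~~ @cpt X a x x;
  cpt_trans : forall X a (x y z : D X), @cpt X a x y -> @cpt X a y z -> @cpt X a x z;
  cit_sym : forall X Y a, cit X Y a = cit Y X a;
  cit_dep : forall X Y, ci X Y -> forall a b,
     agree_on (sel X Y) a b -> cit X Y a = cit X Y b;
  cit_val : forall X Y, ci X Y -> forall a Z,
     cit X Y a = Some Z -> (Z == X) || (Z == Y)
}.

(* Edges of the dependency graph N^*: a directed edge (x,y) is [inl (x,y)],
   an undirected edge (ci-arc) {x,y} is [inr [set x; y]]. *)
Definition edge (V : finType) := ((V * V) + {set V})%type.


Definition dir_edge (V : finType) (D : V -> finType) (N : TCPnet D) (x y : V) : bool :=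
  [|| cp N x y, iarc N x y
    | [exists Z1, exists Z2, [&& ci N Z1 Z2, x \in sel N Z1 Z2 & (y == Z1) || (y == Z2)]]].

Definition is_edge (V : finType) (D : V -> finType) (N : TCPnet D) (e : edge V) : bool :=
  match e with
  | inl (x, y) => dir_edge N x y
  | inr s => [exists X, exists Y, ci N X Y && (s == [set X; Y])]
  end.

Definition is_dir (V : finType) (e : edge V) : bool := if e is inl _ then true else false.
Definition is_ci (V : finType) (e : edge V) : bool := if e is inr _ then true else false.

Definition simple_cycle (V : finType) (D : V -> finType) (N : TCPnet D) (k : nat)
  (vs : 'I_k -> V) (es : 'I_k -> edge V) : Prop :=
  [/\ 2 <= k, injective vs, injective es &
    forall i : 'I_k, is_edge N (es i) /\
      (es i = inl (vs i, vs (ordS i)) \/ es i = inl (vs (ordS i), vs i) \/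
       es i = inr [set vs i; vs (ordS i)])].

(* All directed edges point in direction d (true = along increasing indices). *)
Definition directed_in (V : finType) (k : nat) (vs : 'I_k -> V) (es : 'I_k -> edge V)
  (d : bool) : Prop :=
  forall i : 'I_k, is_dir (es i) ->
    es i = inl (if d then (vs i, vs (ordS i)) else (vs (ordS i), vs i)).

Definition semi_directed_cycle (V : finType) (D : V -> finType) (N : TCPnet D) (k : nat)
  (vs : 'I_k -> V) (es : 'I_k -> edge V) : Prop :=
  [/\ simple_cycle N vs es,
      exists i : 'I_k, is_ci (es i) &
      exists d : bool, directed_in vs es d].

Definition src (V : finType) (k : nat) (vs : 'I_k -> V) (d : bool) (i : 'I_k) : V :=
  if d then vs i else vs (ordS i).

Definition cond_directed (V : finType) (D : V -> finType) (N : TCPnet D) (k : nat)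
  (vs : 'I_k -> V) (es : 'I_k -> edge V) : Prop :=
  exists (a : assignment D) (d : bool),
    directed_in vs es d /\
    forall i : 'I_k, is_ci (es i) -> cit N (vs i) (vs (ordS i)) a = Some (src vs d i).

Definition cond_acyclic (V : finType) (D : V -> finType) (N : TCPnet D) (k : nat)
  (vs : 'I_k -> V) (es : 'I_k -> edge V) : Prop := ~ cond_directed N vs es.

(* w (an assignment to W, W a subset of S(x,y)) orients the ci-arc {x,y} with
   source s: all defined CIT rows consistent with w have entry s. *)
Definition orients (V : finType) (D : V -> finType) (N : TCPnet D) (W : {set V})
  (w : assignment D) (x y s : V) : Prop :=
  forall a : assignment D, agree_on W a w ->
    forall t, cit N x y a = Some t -> t = s.

Definition selA (V : finType) (D : V -> finType) (N : TCPnet D) (k : nat)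
  (vs : 'I_k -> V) (i : 'I_k) : {set V} := sel N (vs i) (vs (ordS i)).

Definition orients_at (V : finType) (D : V -> finType) (N : TCPnet D) (k : nat)
  (vs : 'I_k -> V) (W : {set V}) (w : assignment D) (i : 'I_k) (d : bool) : Prop :=
  orients N W w (vs i) (vs (ordS i)) (src vs d i).

From mathcomp Require Import all_boot.

(* A witness [a] of conditional directedness in direction [d] is itself an
   assignment to S(gamma_i) :&: S(gamma_j), and every row consistent with it
   (namely [a]) orients the ci-arcs of the cycle in direction [d]. So [a]
   orients each of gamma_i, gamma_j in direction [d] only, contradicting both
   (a) and (b). *)

Lemma ordS_neq (k : nat) (i : 'I_k) : 2 <= k -> ordS i != i.
Proof.
move=> k_ge2; apply/eqP => /(congr1 val) /=.
have [ltSk | ] := ltnP i.+1 k.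
  by rewrite modn_small // => /eqP; rewrite gtn_eqF.
move=> le_k_Si; have Si_k : i.+1 = k by apply/eqP; rewrite eqn_leq ltn_ord.
by rewrite Si_k modnn => i0; move: k_ge2; rewrite -Si_k -i0.
Qed.

Lemma src_inj_dir (V : finType) (k : nat) (vs : 'I_k -> V) (i : 'I_k) (d d' : bool) :
  2 <= k -> injective vs -> src vs d i = src vs d' i -> d = d'.
Proof.
move=> k_ge2 vs_inj; have := @ordS_neq k i k_ge2.
by case: d; case: d' => //= /eqP Si_i /vs_inj eq_Si_i; case: Si_i.
Qed.

Lemma orients_at_cit_dir (V : finType) (D : V -> finType) (N : TCPnet D)
    (k : nat) (vs : 'I_k -> V) (W : {set V}) (a : assignment D) (l : 'I_k)
    (d d' : bool) :
  2 <= k -> injective vs ->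
  cit N (vs l) (vs (ordS l)) a = Some (src vs d l) ->
  orients_at N vs W a l d' -> d' = d.
Proof.
move=> k_ge2 vs_inj cit_a orient_a.
apply: (@src_inj_dir V k vs l) k_ge2 vs_inj _.
by rewrite -(orient_a a (fun _ _ => erefl) _ cit_a).
Qed.

Theorem lemma6 (V : finType) (D : V -> finType) (N : TCPnet D) (k : nat)
  (vs : 'I_k -> V) (es : 'I_k -> edge V) :
  semi_directed_cycle N vs es ->
  (exists i j : 'I_k,
     [/\ i != j, is_ci (es i), is_ci (es j) &
       (* (a) *)
       ((exists l : 'I_k, is_dir (es l)) /\
        forall d : bool, directed_in vs es d ->
        forall w : assignment D,
          orients_at N vs (selA N vs i :&: selA N vs j) w i (~~ d) \/
          orients_at N vs (selA N vs i :&: selA N vs j) w j (~~ d))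
       \/
       (* (b) *)
       ((forall l : 'I_k, is_ci (es l)) /\
        forall w : assignment D, exists d : bool,
          orients_at N vs (selA N vs i :&: selA N vs j) w i d /\
          orients_at N vs (selA N vs i :&: selA N vs j) w j (~~ d))]) ->
  cond_acyclic N vs es.
Proof.
move=> [[k_ge2 vs_inj _ _] _ _] [i [j [_ ci_i ci_j opposite]]] [a [d [dir_d cit_a]]].
have a_orients_d l d' : is_ci (es l) ->
    orients_at N vs (selA N vs i :&: selA N vs j) a l d' -> d' = d.
  by move=> ci_l; apply: orients_at_cit_dir k_ge2 vs_inj (cit_a l ci_l).
case: opposite => [[_ opp_a] | [_ opp_b]].
  have [/(a_orients_d _ _ ci_i) | /(a_orients_d _ _ ci_j)] := opp_a d dir_d a;
    by case: d {dir_d cit_a a_orients_d}.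
have [d' [/(a_orients_d _ _ ci_i) -> /(a_orients_d _ _ ci_j)]] := opp_b a.
by case: d {dir_d cit_a a_orients_d}.
Qed.
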